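(* Assume $d'=1$, $t\ge2$, and $a<d$. Fix $n\ne j$ in $[t]$ and let $F_{n,j}$ be the $\binom{d+1}2\times d$ matrix with rows indexed by $\{k_1,k_2\}\in\operatorname{Mult}_2([d])$, columns by $k_3\in[d]$, and entries $(F_{n,j})_{\{k_1,k_2\},k_3}=y_{n,j}(\{k_1,k_2\},k_3)$. Then $\operatorname{rank}F_{n,j}(\mu(W))\le a$ for all $W$. Consequently all $\binom{\binom{d+1}{2}}{a+1}\binom{d}{a+1}$ minors of size $(a+1)\times(a+1)$ of $F_{n,j}$, homogeneous polynomials of degree $a+1$, vanish on the attention variety.
   Context: Setup: $Q,K\in\mathbb R^{a\times d}$, $V\in\mathbb R^{1\times d}$, $A=K^\top Q$ (so $\operatorname{rank}A\le a$), $\varphi_W(X)=VX(X^\top AX)$ for $X=(x_{kn})\in\mathbb R^{d\times t}$. For $\mathcal A\in\operatorname{Mult}_2([d])$ (size-2 multisets on $[d]$), $b\in[d]$, $n\ne j$: $c_{n,j}(\mathcal A,b)$ is the coefficient of $(\prod_{u\in\mathcal A}x_{un})x_{bj}$ in $\varphi_W(X)[1,j]$ and $y_{n,j}(\mathcal A,b)=c_{n,j}(\mathcal A,b)/|\operatorname{Perm}(\mathcal A)|$, $\operatorname{Perm}$ being the set of distinct orderings. $\mu$ maps $W=(Q,K,V)$ to all scaled coefficients (ambient coordinates with the same names); the attention variety is the Zariski closure of $\operatorname{im}\mu$. *)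

From HB Require Import structures.
From mathcomp Require Import all_boot all_order all_algebra.
From mathcomp Require Import mpoly.
Set Implicit Arguments.
Unset Strict Implicit.
Unset Printing Implicit Defensive.
Import Order.TTheory GRing.Theory Num.Theory.
Local Open Scope ring_scope.

(* Size-2 multisets {k1,k2} on [d], represented by ordered pairs k1 <= k2. *)
Definition mult2 (d : nat) := {p : 'I_d * 'I_d | (p.1 <= p.2)%N}.

Definition perm_mult2_set (d : nat) (A : mult2 d) : {set 'I_d * 'I_d} :=
  [set ((val A).1, (val A).2); ((val A).2, (val A).1)].

Definition attA (R : comRingType) (a d : nat) (Q K : 'M[R]_(a, d)) : 'M[R]_d :=
  K^T *m Q.

Definition Xvar (R : comRingType) (d t : nat) (k : 'I_d) (m : 'I_t)
  : {mpoly R[d * t]} := 'X_(mxvec_index k m).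
Definition Xmat (R : comRingType) (d t : nat) : 'M[{mpoly R[d * t]}]_(d, t) :=
  \matrix_(k, m) Xvar R k m.

Definition phiW (R : comRingType) (a d t : nat) (Q K : 'M[R]_(a, d))
  (V : 'M[R]_(1, d)) : 'M[{mpoly R[d * t]}]_(1, t) :=
  let X := Xmat R d t in
  (map_mx (fun c => c%:MP) V *m X) *m (X^T *m map_mx (fun c => c%:MP) (attA Q K) *m X).

Definition monoAb (d t : nat) (n j : 'I_t) (A : mult2 d) (b : 'I_d)
  : 'X_{1..d * t} :=
  (U_(mxvec_index (val A).1 n) + U_(mxvec_index (val A).2 n)
     + U_(mxvec_index b j))%MM.

Definition cnj (R : comRingType) (a d t : nat) (Q K : 'M[R]_(a, d))
  (V : 'M[R]_(1, d)) (n j : 'I_t) (A : mult2 d) (b : 'I_d) : R :=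
  (phiW t Q K V 0 j)@_(monoAb n j A b).

Definition ynj (R : fieldType) (a d t : nat) (Q K : 'M[R]_(a, d))
  (V : 'M[R]_(1, d)) (n j : 'I_t) (A : mult2 d) (b : 'I_d) : R :=
  cnj Q K V n j A b / (#|perm_mult2_set A|)%:R.

Definition coordT (d t : nat) :=
  {c : 'I_t * 'I_t * mult2 d * 'I_d | c.1.1.1 != c.1.1.2}.
Definition coord (d t : nat) (n j : 'I_t) (hnj : n != j) (A : mult2 d)
  (b : 'I_d) : coordT d t := exist _ (n, j, A, b) hnj.

Definition mu (R : fieldType) (a d t : nat) (Q K : 'M[R]_(a, d))
  (V : 'M[R]_(1, d)) : coordT d t -> R :=
  fun c => ynj Q K V (val c).1.1.1 (val c).1.1.2 (val c).1.2 (val c).2.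

Notation ambPoly R d t := {mpoly R[#|{: coordT d t}|]}.
Definition ambVar (R : comRingType) (d t : nat) (c : coordT d t)
  : ambPoly R d t := 'X_(enum_rank c).
Definition ambEval (R : comRingType) (d t : nat) (P : ambPoly R d t)
  (z : coordT d t -> R) : R := P.@[fun i => z (enum_val i)].

(* The attention variety: Zariski closure of the image of mu. *)
Definition attention_variety (R : fieldType) (a d t : nat)
  (z : coordT d t -> R) : Prop :=
  forall P : ambPoly R d t,
    (forall (Q K : 'M[R]_(a, d)) (V : 'M[R]_(1, d)), ambEval P (mu Q K V) = 0) ->
    ambEval P z = 0.

Definition Fnj (R : ringType) (d t : nat) (n j : 'I_t) (hnj : n != j)
  (z : coordT d t -> R) : 'M[R]_(#|{: mult2 d}|, d) :=
  \matrix_(i, k) z (coord hnj (enum_val i) k).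

Definition Fminor (R : comRingType) (d t a : nat) (n j : 'I_t) (hnj : n != j)
  (f : 'I_a.+1 -> 'I_#|{: mult2 d}|) (g : 'I_a.+1 -> 'I_d) : ambPoly R d t :=
  \det (\matrix_(r, s) ambVar R (coord hnj (enum_val (f r)) (g s))).

From Pilot Require Import Defs.
From HB Require Import structures.
From mathcomp Require Import all_boot all_order all_algebra.
From mathcomp Require Import mpoly ring.
Import Order.TTheory GRing.Theory Num.Theory.
Local Open Scope ring_scope.

(* Every monomial of phi_W(X)[1,j] has the form x_{k m} x_{p m} x_{q j}, with
   coefficient V_k A_{p q}.  For n != j the monomial x_{k1 n} x_{k2 n} x_{b j}
   only arises with q = b, so y_{n,j}({k1,k2},b) = sum_p M_{{k1,k2},p} A_{p b}
   for a matrix M depending on V alone: F_{n,j}(mu(W)) = M (K^T Q) has rank at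
   most rank Q <= a.  Hence every (a+1)-minor of F_{n,j} vanishes on im mu, thus
   on its Zariski closure, and is homogeneous of degree a+1 as a determinant of
   variables. *)

Lemma mxvec_index_inj {m n : nat} (i i' : 'I_m) (k k' : 'I_n) :
  mxvec_index i k = mxvec_index i' k' -> i = i' /\ k = k'.
Proof. by move=> /cast_ord_inj /enum_rank_inj [-> ->]. Qed.

Section PhiCoefficients.

Variables (d t : nat).

Definition phi_mono (m : 'I_t) (k p q : 'I_d) (j : 'I_t) : 'X_{1..d * t} :=
  (U_(mxvec_index k m) + U_(mxvec_index p m) + U_(mxvec_index q j))%MM.

Lemma phiW_entryE (R : comNzRingType) (a : nat) (Q K : 'M[R]_(a, d))
    (V : 'M[R]_(1, d)) (j : 'I_t) :
  phiW t Q K V 0 j =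
  \sum_(m < t) \sum_(k < d) \sum_(q < d) \sum_(p < d)
     (V 0 k * attA Q K p q)%:MP * 'X_[phi_mono m k p q j].
Proof.
rewrite /phiW !mxE; apply: eq_bigr => m _.
rewrite !mxE mulr_suml; apply: eq_bigr => k _.
rewrite !mxE mulr_sumr; apply: eq_bigr => q _.
rewrite !mxE mulr_suml mulr_sumr; apply: eq_bigr => p _.
by rewrite !mxE /phi_mono !mpolyXD mpolyCM /Xvar; ring.
Qed.

Lemma cnjE (R : comNzRingType) (a : nat) (Q K : 'M[R]_(a, d))
    (V : 'M[R]_(1, d)) (n j : 'I_t) (A : mult2 d) (b : 'I_d) :
  cnj Q K V n j A b =
  \sum_(m < t) \sum_(k < d) \sum_(q < d) \sum_(p < d)
     V 0 k * attA Q K p q * (phi_mono m k p q j == monoAb n j A b)%:R.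
Proof.
rewrite /cnj phiW_entryE; do 4! (rewrite raddf_sum; apply: eq_bigr => ? _).
by rewrite /= mcoeffCM mcoeffX.
Qed.

Lemma phi_mono_eqE (n j m : 'I_t) (k p q : 'I_d) (A : mult2 d) (b : 'I_d) :
  n != j ->
  (phi_mono m k p q j == monoAb n j A b) =
  (q == b) && ((U_(mxvec_index k m) + U_(mxvec_index p m))%MM ==
               (U_(mxvec_index (val A).1 n) + U_(mxvec_index (val A).2 n))%MM).
Proof.
rewrite /phi_mono /monoAb => hnj; have [-> | hqb] := eqVneq q b.
  by apply/eqP/eqP => [/addIm | ->].
apply/negbTE/eqP => /(congr1 (fun mm : 'X_{1..d * t} => mm (mxvec_index q j))).
have off_col u : (mxvec_index u n == mxvec_index q j) = false.
  by apply/negbTE/eqP => /mxvec_index_inj [_ enj]; rewrite enj eqxx in hnj.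
rewrite !mnmDE !mnm1E eqxx !off_col /=.
case: (eqVneq (mxvec_index b j) _) => [/mxvec_index_inj [ebq _] | _].
  by rewrite ebq eqxx in hqb.
by rewrite addn1.
Qed.

End PhiCoefficients.

Definition Fnj_lfactor {R : fieldType} {d t : nat} (V : 'M[R]_(1, d)) (n : 'I_t)
  : 'M[R]_(#|{: mult2 d}|, d) :=
  \matrix_(r, p)
    ((\sum_(m < t) \sum_(k < d) V 0 k *
       ((U_(mxvec_index k m) + U_(mxvec_index p m))%MM ==
        (U_(mxvec_index (val (enum_val r)).1 n)
         + U_(mxvec_index (val (enum_val r)).2 n))%MM)%:R)
     / (#|perm_mult2_set (enum_val r)|)%:R).

Lemma Fnj_muE (R : fieldType) (a d t : nat) (Q K : 'M[R]_(a, d))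
    (V : 'M[R]_(1, d)) (n j : 'I_t) (hnj : n != j) :
  Fnj hnj (mu Q K V) = Fnj_lfactor V n *m attA Q K.
Proof.
apply/matrixP => r b; rewrite !mxE /mu /= /ynj cnjE.
under [RHS]eq_bigr do rewrite mxE mulrAC.
rewrite -mulr_suml; congr (_ / _).
under [RHS]eq_bigr do rewrite mulr_suml.
rewrite [RHS]exchange_big; apply: eq_bigr => m _.
under [RHS]eq_bigr do rewrite mulr_suml.
rewrite [RHS]exchange_big; apply: eq_bigr => k _.
rewrite (bigD1 b) //= [X in _ + X]big1 ?addr0 => [|q hqb].
  by apply: eq_bigr => p _; rewrite phi_mono_eqE // eqxx /=; ring.
by apply: big1 => p _; rewrite phi_mono_eqE // (negbTE hqb) mulr0.
Qed.

Lemma rank_Fnj_mu (R : fieldType) (a d t : nat) (Q K : 'M[R]_(a, d))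
    (V : 'M[R]_(1, d)) (n j : 'I_t) (hnj : n != j) :
  (\rank (Fnj hnj (mu Q K V)) <= a)%N.
Proof.
rewrite Fnj_muE /attA; apply: leq_trans (mxrankM_maxr _ _) _.
by apply: leq_trans (mxrankM_maxr _ _) _; apply: rank_leq_row.
Qed.

Lemma det_rank_lt (R : fieldType) (k : nat) (S : 'M[R]_k) :
  (\rank S < k)%N -> \det S = 0.
Proof.
apply: contraTeq => detS; rewrite mxrank_unit ?ltnn //.
by rewrite unitmxE unitfE.
Qed.

Lemma mxrank_mxsub {R : fieldType} {m1 n1 m2 n2 : nat} (f : 'I_m2 -> 'I_m1)
    (g : 'I_n2 -> 'I_n1) (A : 'M[R]_(m1, n1)) :
  (\rank (mxsub f g A) <= \rank A)%N.
Proof.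
have -> : mxsub f g A = rowsub f (rowsub g A^T)^T by apply/matrixP => i k; rewrite !mxE.
apply: leq_trans (mxrankS (rowsub_sub _ _)) _.
by rewrite mxrank_tr; apply: leq_trans (mxrankS (rowsub_sub _ _)) _; rewrite mxrank_tr.
Qed.

Lemma dhomog_prod_linear (R : comNzRingType) (N k : nat) (F : 'I_k -> {mpoly R[N]}) :
  (forall i, F i \in 1.-homog) -> \prod_(i < k) F i \in k.-homog.
Proof.
elim: k F => [|k IH] F hF; first by rewrite big_ord0 dhomog1.
rewrite big_ord_recr /= -[X in _ \in X.-homog]addn1; apply: dhomogM; first exact: IH.
exact: hF.
Qed.

Lemma Fminor_homog (R : comNzRingType) (d t a : nat) (n j : 'I_t) (hnj : n != j)
    (f : 'I_a.+1 -> 'I_#|{: mult2 d}|) (g : 'I_a.+1 -> 'I_d) :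
  Fminor R hnj f g \in (a.+1).-homog.
Proof.
rewrite /Fminor /determinant; apply: rpred_sum => s _.
rewrite -signr_odd; case: (perm.odd_perm s); rewrite ?mul1r ?mulN1r ?rpredN;
  by apply: dhomog_prod_linear => i; rewrite mxE /ambVar dhomogX /= mdeg1.
Qed.

Lemma Fminor_mu (R : fieldType) (a d t : nat) (n j : 'I_t) (hnj : n != j)
    (f : 'I_a.+1 -> 'I_#|{: mult2 d}|) (g : 'I_a.+1 -> 'I_d)
    (Q K : 'M[R]_(a, d)) (V : 'M[R]_(1, d)) :
  ambEval (Fminor R hnj f g) (mu Q K V) = 0.
Proof.
rewrite /ambEval /Fminor -det_map_mx; apply: det_rank_lt.
have -> : map_mx (meval (fun i => mu Q K V (enum_val i)))
    (\matrix_(r, s) ambVar R (Defs.coord hnj (enum_val (f r)) (g s)))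
   = mxsub f g (Fnj hnj (mu Q K V)).
  by apply/matrixP => r s; rewrite !mxE /ambVar mevalXU enum_rankK.
by rewrite ltnS (leq_trans (mxrank_mxsub f g _)) ?rank_Fnj_mu.
Qed.

Theorem mainTheorem10 (R : realFieldType) (a d t : nat)
  (ht : (2 <= t)%N) (had : (a < d)%N) (n j : 'I_t) (hnj : n != j) :
  (forall (Q K : 'M[R]_(a, d)) (V : 'M[R]_(1, d)),
      (\rank (Fnj hnj (mu Q K V)) <= a)%N) /\
  (forall (f : 'I_a.+1 -> 'I_#|{: mult2 d}|) (g : 'I_a.+1 -> 'I_d),
      Fminor R hnj f g \in (a.+1).-homog /\
      (forall z : coordT d t -> R,
          attention_variety a z -> ambEval (Fminor R hnj f g) z = 0)).
Proof.
split=> [Q K V | f g]; first exact: rank_Fnj_mu.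
split=> [|z z_var]; first exact: Fminor_homog.
by apply: z_var => Q K V; apply: Fminor_mu.
Qed.
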